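(* Fix $\mu,\nu$ with $\mu>-3$ and $|\nu|<\mu+3$, and fix $x>0$. Then the function $\delta\mapsto \tilde{t}_{\mu+\delta+1,\nu+\delta+1}(x)/\tilde{t}_{\mu+\delta,\nu+\delta}(x)$ is strictly decreasing on $(0,\infty)$.
   Context: For real $\mu,\nu$ the (normalized) modified Lommel function of the first kind is $$\tilde{t}_{\mu,\nu}(x)=\sum_{k=0}^\infty\frac{(\frac{1}{2}x)^{\mu+2k+1}}{\Gamma\big(k+\frac{\mu-\nu+3}{2}\big)\Gamma\big(k+\frac{\mu+\nu+3}{2}\big)},\quad x>0.$$ *)

From Stdlib Require Import Reals.
From Coquelicot Require Import Coquelicot.
Open Scope R_scope.

(* Euler's Gamma function, Gamma(s) = int_0^oo t^(s-1) e^(-t) dt, for s > 0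
   (only used at positive arguments), as an improper Riemann integral. *)
Definition Gamma (s : R) : R :=
  RInt_gen (fun t => Rpower t (s - 1) * exp (- t))
           (at_right 0) (Rbar_locally p_infty).

Definition lommel_t_term (mu nu x : R) (k : nat) : R :=
  Rpower (x / 2) (mu + 2 * INR k + 1)
  / (Gamma (INR k + (mu - nu + 3) / 2) * Gamma (INR k + (mu + nu + 3) / 2)).

Definition lommel_t (mu nu x : R) : R := Series (lommel_t_term mu nu x).

From Stdlib Require Import Reals Lra Lia Classical.
From Coquelicot Require Import Coquelicot.
Open Scope R_scope.

(** Put a = (mu - nu + 3)/2, c = (mu + nu + 3)/2 + delta and z = (x/2)^2.  By
    Gamma(k + s) = Gamma(s) (s)_k the Lommel series is (x/2)^(mu+delta+1) / (Gamma a Gamma c)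
    times F(c) = sum_k z^k / ((a)_k (c)_k), and the ratio in question becomes
    (x/2) F(c+1) / (c F(c)).  With p_k = z^k / (a)_k one has F(c+1)/c = Psi(c) = sum_k
    p_k / (c)_(k+1) and F(c) = 1 + Phi(c), Phi(c) = sum_k p_(k+1) / (c)_(k+1), so for c1 < c2
      Psi(c2) F(c1) - Psi(c1) F(c2) = (Psi(c2) - Psi(c1)) + (Psi(c2) Phi(c1) - Psi(c1) Phi(c2)).
    The first bracket is negative since 1/(c)_(k+1) decreases in c.  The second is <= 0 by a
    Chebyshev-type pairing of the terms j < n: both p_(k+1)/p_k and (c1)_(k+1)/(c2)_(k+1)
    decrease in k, so each pair contributes a product of two factors of opposite signs. *)

Fixpoint poch (c : R) (k : nat) : R :=
  match k with O => 1 | S k => poch c k * (c + INR k) end.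

Lemma poch_pos c k : 0 < c -> 0 < poch c k.
Proof.
  intros Hc; induction k as [|k IH]; simpl; [lra|].
  pose proof (pos_INR k); apply Rmult_lt_0_compat; lra.
Qed.

Lemma poch_succ_shift c k : poch c (S k) = c * poch (c + 1) k.
Proof.
  induction k as [|k IH]; [simpl; ring|].
  change (poch c (S (S k))) with (poch c (S k) * (c + INR (S k))).
  rewrite IH, S_INR; simpl; ring.
Qed.

Lemma poch_ratio_le c1 c2 j n : 0 < c1 <= c2 -> (j <= n)%nat ->
  poch c1 n * poch c2 j <= poch c2 n * poch c1 j.
Proof.
  intros Hc Hjn; induction Hjn as [|n Hjn IH]; simpl; [lra|].
  pose proof (pos_INR n); pose proof (poch_pos c1 n ltac:(lra));
    pose proof (poch_pos c2 n ltac:(lra)); pose proof (poch_pos c1 j ltac:(lra)).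
  apply Rle_trans with (poch c2 n * poch c1 j * (c1 + INR n)).
  - replace (poch c1 n * (c1 + INR n) * poch c2 j)
      with (poch c1 n * poch c2 j * (c1 + INR n)) by ring.
    apply Rmult_le_compat_r; lra.
  - replace (poch c2 n * (c2 + INR n) * poch c1 j)
      with (poch c2 n * poch c1 j * (c2 + INR n)) by ring.
    apply Rmult_le_compat_l; [apply Rlt_le, Rmult_lt_0_compat|]; lra.
Qed.

(** * Improper integrals over (0, +oo) *)

Lemma filterlim_monotone_bounded {T : Type} (F : (T -> Prop) -> Prop) {FF : Filter F}
  (D : T -> Prop) (g : T -> R) (K : R) (x1 : T) :
  D x1 -> (forall x, D x -> g x <= K) ->
  (forall x0, D x0 -> F (fun x => D x /\ g x0 <= g x)) ->
  exists L, filterlim g F (locally L) /\ (forall x, D x -> g x <= L).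
Proof.
  intros Hx1 HK Hmono.
  set (E := fun y => exists x, D x /\ y = g x).
  destruct (completeness E) as [L [HL1 HL2]].
  - exists K; intros y [x [Hx ->]]; auto.
  - exists (g x1), x1; auto.
  - assert (Hup : forall x, D x -> g x <= L) by (intros x Hx; apply HL1; exists x; auto).
    exists L; split; [|exact Hup].
    apply (filterlim_locally (F := F)); intros eps.
    destruct (classic (exists x0, D x0 /\ L - eps < g x0)) as [[x0 [Hx0 Hlt]]|Hno].
    + apply (filter_imp (fun x => D x /\ g x0 <= g x)); [|apply Hmono, Hx0].
      intros x [Hx Hle]; pose proof (Hup x Hx).
      change (Rabs (g x - L) < eps); apply Rabs_lt_between'; lra.
    + assert (L <= L - eps); [|pose proof (cond_pos eps); lra].
      apply HL2; intros y [x [Hx ->]]; apply Rnot_lt_le; intros Hlt; apply Hno; eauto.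
Qed.

Lemma is_RInt_gen_of_lim (F G : (R -> Prop) -> Prop) {FF : Filter F} {FG : Filter G}
  (f : R -> R) (l : R) :
  filter_prod F G (fun ab => ex_RInt f (fst ab) (snd ab)) ->
  filterlim (fun ab => RInt f (fst ab) (snd ab)) (filter_prod F G) (locally l) ->
  is_RInt_gen f F G l.
Proof.
  intros Hex Hlim P HP; unfold filtermapi.
  apply (filter_imp (fun ab => ex_RInt f (fst ab) (snd ab) /\ P (RInt f (fst ab) (snd ab)))).
  - intros ab [Hab HPab]; exists (RInt f (fst ab) (snd ab)); split; [|exact HPab].
    apply (RInt_correct (V := R_CompleteNormedModule)), Hab.
  - apply filter_and; [exact Hex|exact (Hlim P HP)].
Qed.

Lemma filterlim_sub_snd_fst (F G : (R -> Prop) -> Prop) {FF : Filter F} {FG : Filter G}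
  (g : R -> R) (la lb : R) :
  filterlim g F (locally la) -> filterlim g G (locally lb) ->
  filterlim (fun ab => g (snd ab) - g (fst ab)) (filter_prod F G) (locally (lb - la)).
Proof.
  intros Hla Hlb.
  apply (filterlim_comp_2 (G := locally lb) (H := locally (opp la))
           (fun ab => g (snd ab)) (fun ab => opp (g (fst ab))) plus).
  - eapply filterlim_comp; [apply filterlim_snd|exact Hlb].
  - apply (filterlim_comp _ _ _ (fun ab => g (fst ab)) opp _ (locally la));
      [eapply filterlim_comp; [apply filterlim_fst|exact Hla]|].
    apply (filterlim_opp (K := R_AbsRing) (V := R_NormedModule)).
  - apply (filterlim_plus (K := R_AbsRing) (V := R_NormedModule)).
Qed.

Lemma at_right_0_pinfty_split :
  filter_prod (at_right 0) (Rbar_locally p_infty) (fun ab => 0 < fst ab <= 1 /\ 1 <= snd ab).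
Proof.
  exists (fun a => 0 < a <= 1) (fun b => 1 <= b).
  - exists (mkposreal 1 Rlt_0_1); intros a Ha Hpos.
    change (Rabs (a - 0) < 1) in Ha; rewrite Rminus_0_r, Rabs_pos_eq in Ha; simpl; lra.
  - exists 1; intros; lra.
  - intros a b Ha Hb; simpl; auto.
Qed.

Section HalfLine.
Variable f : R -> R.
Hypothesis f_cont : forall t, 0 < t -> continuous f t.

Lemma ex_RInt_halfline a b : 0 < a -> 0 < b -> ex_RInt f a b.
Proof.
  intros Ha Hb; apply (ex_RInt_continuous (V := R_CompleteNormedModule)); intros t Ht.
  apply f_cont; pose proof (Rmin_glb_lt a b 0 Ha Hb); lra.
Qed.

Lemma is_RInt_gen_derive_halfline (F : R -> R) (la lb : R) :
  (forall t, 0 < t -> is_derive F t (f t)) ->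
  filterlim F (at_right 0) (locally la) -> filterlim F (Rbar_locally p_infty) (locally lb) ->
  is_RInt_gen f (at_right 0) (Rbar_locally p_infty) (lb - la).
Proof.
  intros HF Hla Hlb; apply (is_RInt_gen_of_lim (at_right 0) (Rbar_locally p_infty)).
  - eapply filter_imp; [|exact at_right_0_pinfty_split].
    intros [a b] [Ha Hb]; apply ex_RInt_halfline; simpl in *; lra.
  - apply (filterlim_ext_loc (fun ab => F (snd ab) - F (fst ab))).
    + eapply filter_imp; [|exact at_right_0_pinfty_split].
      intros [a b] [Ha Hb]; simpl in *; symmetry; apply is_RInt_unique.
      apply (is_RInt_derive (V := R_CompleteNormedModule)).
      * intros t Ht; apply HF; pose proof (Rmin_glb_lt a b 0 ltac:(lra) ltac:(lra)); lra.
      * intros t Ht; apply f_cont; pose proof (Rmin_glb_lt a b 0 ltac:(lra) ltac:(lra)); lra.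
    + apply (filterlim_sub_snd_fst (at_right 0) (Rbar_locally p_infty)); assumption.
Qed.

Lemma RInt_halfline_Chasles a b c : 0 < a -> 0 < b -> 0 < c ->
  RInt f a b + RInt f b c = RInt f a c.
Proof.
  intros Ha Hb Hc; apply (RInt_Chasles (V := R_CompleteNormedModule));
    apply ex_RInt_halfline; assumption.
Qed.

Hypothesis f_nonneg : forall t, 0 < t -> 0 <= f t.

Lemma RInt_halfline_nonneg a b : 0 < a <= b -> 0 <= RInt f a b.
Proof.
  intros Hab; apply RInt_ge_0; [lra|apply ex_RInt_halfline; lra|].
  intros t Ht; apply f_nonneg; lra.
Qed.

Lemma filterlim_RInt_at_right_0 A : (forall e, 0 < e <= 1 -> RInt f e 1 <= A) ->
  exists LA, filterlim (fun e => RInt f e 1) (at_right 0) (locally LA) /\ 0 <= LA.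
Proof.
  intros HA.
  destruct (filterlim_monotone_bounded (at_right 0) (fun e => 0 < e <= 1)
              (fun e => RInt f e 1) A 1) as [LA [HLA Hup]]; [lra|exact HA| |].
  - intros e0 He0; exists (mkposreal e0 (proj1 He0)); intros e He Hpos.
    change (Rabs (e - 0) < e0) in He; rewrite Rminus_0_r, Rabs_pos_eq in He by lra.
    split; [lra|].
    rewrite <- (RInt_halfline_Chasles e e0 1) by lra.
    pose proof (RInt_halfline_nonneg e e0 ltac:(lra)); lra.
  - exists LA; split; [exact HLA|].
    pose proof (Hup 1 ltac:(lra)) as H1; rewrite RInt_point in H1; exact H1.
Qed.

Lemma filterlim_RInt_pinfty B : (forall M, 1 <= M -> RInt f 1 M <= B) ->
  exists LB, filterlim (fun M => RInt f 1 M) (Rbar_locally p_infty) (locally LB)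
             /\ forall M, 1 <= M -> RInt f 1 M <= LB.
Proof.
  intros HB.
  apply (filterlim_monotone_bounded (Rbar_locally p_infty) (fun M => 1 <= M)
           (fun M => RInt f 1 M) B 1); [lra|exact HB|].
  intros M0 HM0; exists M0; intros M HM; split; [lra|].
  rewrite <- (RInt_halfline_Chasles 1 M0 M) by lra.
  pose proof (RInt_halfline_nonneg M0 M ltac:(lra)); lra.
Qed.

Lemma is_RInt_gen_halfline A B :
  (forall e, 0 < e <= 1 -> RInt f e 1 <= A) -> (forall M, 1 <= M -> RInt f 1 M <= B) ->
  exists l, is_RInt_gen f (at_right 0) (Rbar_locally p_infty) l
            /\ forall M, 1 <= M -> RInt f 1 M <= l.
Proof.
  intros HA HB.
  destruct (filterlim_RInt_at_right_0 A HA) as [LA [HLA HLA0]].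
  destruct (filterlim_RInt_pinfty B HB) as [LB [HLB Hup]].
  exists (LA + LB); split; [|intros M HM; pose proof (Hup M HM); lra].
  apply (is_RInt_gen_of_lim (at_right 0) (Rbar_locally p_infty)).
  - eapply filter_imp; [|exact at_right_0_pinfty_split].
    intros [a b] [Ha Hb]; apply ex_RInt_halfline; simpl in *; lra.
  - apply (filterlim_ext_loc (fun ab => RInt f (fst ab) 1 + RInt f 1 (snd ab))).
    + eapply filter_imp; [|exact at_right_0_pinfty_split].
      intros [a b] [Ha Hb]; simpl in *; apply RInt_halfline_Chasles; lra.
    + apply (filterlim_comp_2 (G := locally LA) (H := locally LB)
               (fun ab => RInt f (fst ab) 1) (fun ab => RInt f 1 (snd ab)) plus).
      * apply (filterlim_comp _ _ _ fst (fun a => RInt f a 1) _ (at_right 0));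
          [apply filterlim_fst|exact HLA].
      * apply (filterlim_comp _ _ _ snd (fun b => RInt f 1 b) _ (Rbar_locally p_infty));
          [apply filterlim_snd|exact HLB].
      * apply (filterlim_plus (K := R_AbsRing) (V := R_NormedModule)).
Qed.
End HalfLine.

(** * The Gamma function *)

Lemma Rpower_succ t y : 0 < t -> Rpower t (y + 1) = Rpower t y * t.
Proof. intros Ht; rewrite Rpower_plus, Rpower_1 by exact Ht; reflexivity. Qed.

Lemma exp_opp_lt_1 t : 0 < t -> exp (- t) < 1.
Proof. intros Ht; rewrite <- exp_0; apply exp_increasing; lra. Qed.

Lemma Rpower_mul_exp_le y t : 0 < y -> 0 < t -> Rpower t y * exp (- t) <= Rpower y y.
Proof.
  (* t^y e^(-t) = (t e^(-t/y))^y, and t/y <= e^(t/y). *)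
  intros Hy Ht.
  assert (E : Rpower t y * exp (- t) = Rpower (t * / exp (t / y)) y).
  { rewrite <- Rpower_mult_distr, <- exp_Ropp by (try apply Rinv_0_lt_compat, exp_pos; lra).
    f_equal; unfold Rpower; rewrite ln_exp; f_equal; field; lra. }
  rewrite E; apply Rle_Rpower_l; [lra|split].
  - apply Rmult_lt_0_compat; [lra|apply Rinv_0_lt_compat, exp_pos].
  - pose proof (exp_ineq1_le (t / y)); pose proof (exp_pos (t / y)).
    apply (Rmult_le_reg_r (exp (t / y))); [lra|].
    rewrite Rmult_assoc, Rinv_l, Rmult_1_r by lra.
    assert (y * (1 + t / y) <= y * exp (t / y)) by (apply Rmult_le_compat_l; lra).
    replace (y * (1 + t / y)) with (y + t) in * by (field; lra); lra.
Qed.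

Lemma Rpower_mul_exp_lim_0 s : 0 < s ->
  filterlim (fun t => Rpower t s * exp (- t)) (at_right 0) (locally 0).
Proof.
  intros Hs; apply (filterlim_locally (F := at_right 0)); intros eps.
  exists (mkposreal (Rpower eps (/ s)) (exp_pos _)); intros t Ht Htpos.
  change (Rabs (t - 0) < Rpower eps (/ s)) in Ht; rewrite Rminus_0_r, Rabs_pos_eq in Ht by lra.
  change (Rabs (Rpower t s * exp (- t) - 0) < eps).
  assert (Hts : Rpower t s < eps).
  { rewrite <- (Rpower_1 eps), <- (Rinv_l s), <- Rpower_mult by (try apply cond_pos; lra).
    apply Rlt_Rpower_l; lra. }
  pose proof (exp_opp_lt_1 t Htpos); pose proof (exp_pos (- t)); pose proof (exp_pos (s * ln t)).
  unfold Rpower in *; rewrite Rminus_0_r, Rabs_pos_eq; nra.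
Qed.

Lemma Rpower_mul_exp_lim_pinfty s : 0 < s ->
  filterlim (fun t => Rpower t s * exp (- t)) (Rbar_locally p_infty) (locally 0).
Proof.
  intros Hs; apply (filterlim_locally (F := Rbar_locally p_infty)); intros eps.
  set (K := Rpower (s + 1) (s + 1)).
  assert (HK : 0 < K) by apply exp_pos.
  exists (Rmax 1 (K / eps)); intros t Ht.
  pose proof (Rmax_l 1 (K / eps)); pose proof (Rmax_r 1 (K / eps)); pose proof (cond_pos eps).
  change (Rabs (Rpower t s * exp (- t) - 0) < eps).
  pose proof (Rpower_mul_exp_le (s + 1) t ltac:(lra) ltac:(lra)) as Hle; fold K in Hle.
  rewrite Rpower_succ in Hle by lra.
  assert (K < eps * t) by (apply (Rmult_lt_reg_r (/ eps)); [apply Rinv_0_lt_compat; lra|];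
                             field_simplify; lra).
  pose proof (exp_pos (- t)); pose proof (exp_pos (s * ln t)).
  unfold Rpower in *; rewrite Rminus_0_r, Rabs_pos_eq; nra.
Qed.

Definition gamma_integrand (s t : R) : R := Rpower t (s - 1) * exp (- t).

Lemma gamma_integrand_pos s t : 0 < t -> 0 < gamma_integrand s t.
Proof. intros _; apply Rmult_lt_0_compat; apply exp_pos. Qed.

Lemma gamma_integrand_continuous s t : 0 < t -> continuous (gamma_integrand s) t.
Proof.
  intros Ht; apply (ex_derive_continuous (V := R_NormedModule)).
  unfold gamma_integrand, Rpower; auto_derive; lra.
Qed.

Lemma RInt_gamma_integrand_le_0_1 s e : 0 < s -> 0 < e <= 1 ->
  RInt (gamma_integrand s) e 1 <= / s.
Proof.
  intros Hs He.
  assert (HI : is_RInt (fun t => Rpower t (s - 1)) e 1 (/ s - Rpower e s / s)).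
  { replace (/ s) with (Rpower 1 s / s) at 1
      by (unfold Rpower; rewrite ln_1, Rmult_0_r, exp_0; field; lra).
    apply (is_RInt_derive (V := R_CompleteNormedModule) (fun t => Rpower t s / s));
      intros t Ht; rewrite Rmin_left in Ht by lra.
    - replace (Rpower t (s - 1)) with (/ s * (s * Rpower t (s - 1))) by (field; lra).
      apply (is_derive_ext (fun u => / s * Rpower u s)); [intros u; apply Rmult_comm|].
      apply is_derive_scal, is_derive_Reals, derivable_pt_lim_power; lra.
    - apply (ex_derive_continuous (V := R_NormedModule)); unfold Rpower; auto_derive; lra. }
  apply Rle_trans with (/ s - Rpower e s / s).
  - apply (is_RInt_le (gamma_integrand s) (fun t => Rpower t (s - 1)) e 1 _ _ ltac:(lra));
      [|exact HI|].
    + apply (RInt_correct (V := R_CompleteNormedModule)), ex_RInt_halfline; try lra.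
      apply gamma_integrand_continuous.
    + intros t Ht; unfold gamma_integrand; pose proof (exp_opp_lt_1 t ltac:(lra)).
      pose proof (exp_pos ((s - 1) * ln t)); unfold Rpower; nra.
  - pose proof (exp_pos (s * ln e)); unfold Rpower, Rdiv.
    pose proof (Rinv_0_lt_compat s Hs); nra.
Qed.

Lemma RInt_gamma_integrand_le_1_pinfty s M : 0 < s -> 1 <= M ->
  RInt (gamma_integrand s) 1 M <= Rpower (s + 1) (s + 1).
Proof.
  intros Hs HM; set (K := Rpower (s + 1) (s + 1)).
  assert (HI : is_RInt (fun t => K / (t * t)) 1 M (K - K / M)).
  { replace (K - K / M) with (- K / M - - K / 1) by (field; lra).
    apply (is_RInt_derive (V := R_CompleteNormedModule) (fun t => - K / t));
      intros t Ht; rewrite Rmin_left, Rmax_right in Ht by lra.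
    - auto_derive; [lra|field; lra].
    - apply (ex_derive_continuous (V := R_NormedModule)); auto_derive; nra. }
  apply Rle_trans with (K - K / M).
  - apply (is_RInt_le (gamma_integrand s) (fun t => K / (t * t)) 1 M _ _ HM); [|exact HI|].
    + apply (RInt_correct (V := R_CompleteNormedModule)), ex_RInt_halfline; try lra.
      apply gamma_integrand_continuous.
    + intros t Ht; pose proof (Rpower_mul_exp_le (s + 1) t ltac:(lra) ltac:(lra)) as Hle.
      fold K in Hle; unfold gamma_integrand.
      replace (s + 1) with (s - 1 + 1 + 1) in Hle by ring.
      rewrite !Rpower_succ in Hle by lra.
      apply (Rmult_le_reg_r (t * t)); [nra|].
      replace (K / (t * t) * (t * t)) with K by (field; lra); lra.
  - assert (0 < K) by apply exp_pos.
    assert (0 < K / M) by (apply Rdiv_lt_0_compat; lra); lra.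
Qed.

Lemma Gamma_correct s : 0 < s ->
  is_RInt_gen (gamma_integrand s) (at_right 0) (Rbar_locally p_infty) (Gamma s)
  /\ RInt (gamma_integrand s) 1 2 <= Gamma s.
Proof.
  intros Hs.
  destruct (is_RInt_gen_halfline (gamma_integrand s) (gamma_integrand_continuous s)
              (fun t Ht => Rlt_le _ _ (gamma_integrand_pos s t Ht))
              (/ s) (Rpower (s + 1) (s + 1)))
    as [l [Hl Hup]].
  - intros e He; apply RInt_gamma_integrand_le_0_1; assumption.
  - intros M HM; apply RInt_gamma_integrand_le_1_pinfty; assumption.
  - replace (Gamma s) with l; [split; [exact Hl|apply Hup; lra]|].
    symmetry; apply (is_RInt_gen_unique (gamma_integrand s) l Hl).
Qed.

Lemma Gamma_pos s : 0 < s -> 0 < Gamma s.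
Proof.
  intros Hs; eapply Rlt_le_trans; [|apply (Gamma_correct s Hs)].
  apply RInt_gt_0; [lra| |]; intros t Ht.
  - apply gamma_integrand_pos; lra.
  - apply gamma_integrand_continuous; lra.
Qed.

Lemma is_derive_Rpower_mul_exp s t : 0 < t ->
  is_derive (fun t => - (Rpower t s * exp (- t))) t
            (gamma_integrand (s + 1) t - s * gamma_integrand s t).
Proof.
  intros Ht; evar (d : R).
  assert (H : is_derive (fun t => - (Rpower t s * exp (- t))) t d)
    by (unfold d, Rpower; auto_derive; [lra|reflexivity]).
  replace (gamma_integrand (s + 1) t - s * gamma_integrand s t) with d; [exact H|].
  unfold d, gamma_integrand; replace (s + 1 - 1) with s by ring; fold (Rpower t s).
  replace (Rpower t s) with (Rpower t (s - 1) * t)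
    by (rewrite <- Rpower_succ by lra; f_equal; ring).
  field; lra.
Qed.

Lemma is_RInt_gen_gamma_integrand_diff s : 0 < s ->
  is_RInt_gen (fun t => gamma_integrand (s + 1) t - s * gamma_integrand s t)
              (at_right 0) (Rbar_locally p_infty) 0.
Proof.
  intros Hs.
  assert (H : is_RInt_gen (fun t => gamma_integrand (s + 1) t - s * gamma_integrand s t)
                          (at_right 0) (Rbar_locally p_infty) (- 0 - - 0)).
  { eapply is_RInt_gen_derive_halfline with (F := fun t => - (Rpower t s * exp (- t))).
    - intros t Ht; apply (ex_derive_continuous (V := R_NormedModule)).
      unfold gamma_integrand, Rpower; auto_derive; lra.
    - apply is_derive_Rpower_mul_exp.
    - apply (filterlim_comp _ _ _ _ Ropp _ (locally 0)); [apply Rpower_mul_exp_lim_0, Hs|].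
      apply (filterlim_opp (K := R_AbsRing) (V := R_NormedModule)).
    - apply (filterlim_comp _ _ _ _ Ropp _ (locally 0)); [apply Rpower_mul_exp_lim_pinfty, Hs|].
      apply (filterlim_opp (K := R_AbsRing) (V := R_NormedModule)). }
  rewrite Ropp_0, Rminus_0_r in H; exact H.
Qed.

Lemma Gamma_succ s : 0 < s -> Gamma (s + 1) = s * Gamma s.
Proof.
  intros Hs.
  pose proof (is_RInt_gen_plus _ _ _ _ (is_RInt_gen_gamma_integrand_diff s Hs)
                (is_RInt_gen_scal _ s _ (proj1 (Gamma_correct s Hs)))) as HS.
  replace (s * Gamma s) with (plus 0 (scal s (Gamma s)))
    by (unfold plus, scal; simpl; unfold mult; simpl; ring).
  change (Gamma (s + 1))
    with (RInt_gen (gamma_integrand (s + 1)) (at_right 0) (Rbar_locally p_infty)).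
  apply is_RInt_gen_unique; eapply is_RInt_gen_ext; [|exact HS].
  apply filter_forall; intros ab t _; unfold plus, scal; simpl; unfold mult; simpl; ring.
Qed.

Lemma Gamma_add_nat s k : 0 < s -> Gamma (INR k + s) = Gamma s * poch s k.
Proof.
  intros Hs; induction k as [|k IH]; [simpl; rewrite Rplus_0_l; ring|].
  rewrite S_INR; replace (INR k + 1 + s) with (INR k + s + 1) by ring.
  rewrite Gamma_succ by (pose proof (pos_INR k); lra).
  rewrite IH; simpl; ring.
Qed.

(** * A Chebyshev-type inequality for series *)

Lemma is_lim_seq_sum_Series (a : nat -> R) :
  ex_series a -> is_lim_seq (sum_f_R0 a) (Series a).
Proof.
  intros E; apply (is_lim_seq_ext (sum_n a)); [intros n; apply sum_n_Reals|].
  exact (Series_correct a E).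
Qed.

Lemma Series_ge_head (a : nat -> R) : ex_series a -> (forall n, 0 <= a n) -> a O <= Series a.
Proof.
  intros E Ha. rewrite Series_incr_1 by exact E.
  assert (0 <= Series (fun k => a (S k))).
  { rewrite <- (Rmult_0_l (Series (fun k => a (S k)))), <- Series_scal_l.
    apply Series_le; [intros n; rewrite Rmult_0_l; split; [lra|apply Ha]|].
    exact (proj1 (ex_series_incr_1 a) E). }
  lra.
Qed.

(* Adding index n to the partial sums changes the cross-product difference by this sum:
   the pairs (j, n) and (n, j) combine into one product. *)
Lemma sum_pairing_step (p u v : nat -> R) n N :
  p n * v n * sum_f_R0 (fun k => p (S k) * u k) N
  + sum_f_R0 (fun k => p k * v k) N * (p (S n) * u n)
  - p n * u n * sum_f_R0 (fun k => p (S k) * v k) N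
  - sum_f_R0 (fun k => p k * u k) N * (p (S n) * v n)
  = sum_f_R0 (fun j => (p n * p (S j) - p j * p (S n)) * (u j * v n - u n * v j)) N.
Proof. induction N as [|N IH]; simpl; [ring|rewrite <- IH; ring]. Qed.

Section Pairing.
Variables p u v : nat -> R.
Hypothesis p_ratio : forall j n, (j < n)%nat -> p j * p (S n) <= p n * p (S j).
Hypothesis uv_ratio : forall j n, (j < n)%nat -> u n * v j <= u j * v n.

Lemma sum_pairing_le N :
  sum_f_R0 (fun k => p k * u k) N * sum_f_R0 (fun k => p (S k) * v k) N
  <= sum_f_R0 (fun k => p k * v k) N * sum_f_R0 (fun k => p (S k) * u k) N.
Proof.
  induction N as [|N IH]; simpl; [lra|].
  pose proof (sum_pairing_step p u v (S N) N) as E.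
  assert (0 <= sum_f_R0 (fun j => (p (S N) * p (S j) - p j * p (S (S N)))
                                   * (u j * v (S N) - u (S N) * v j)) N).
  { rewrite <- (Rmult_0_l (INR (S N))), <- sum_cte. apply sum_Rle. intros j Hj.
    pose proof (p_ratio j (S N) ltac:(lia)); pose proof (uv_ratio j (S N) ltac:(lia)).
    apply Rmult_le_pos; lra. }
  lra.
Qed.

Lemma Series_pairing_le :
  ex_series (fun k => p k * u k) -> ex_series (fun k => p (S k) * v k) ->
  ex_series (fun k => p k * v k) -> ex_series (fun k => p (S k) * u k) ->
  Series (fun k => p k * u k) * Series (fun k => p (S k) * v k)
  <= Series (fun k => p k * v k) * Series (fun k => p (S k) * u k).
Proof.
  intros E1 E2 E3 E4.
  apply (is_lim_seq_le _ _ (Finite _) (Finite _) sum_pairing_le);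
    apply is_lim_seq_mult'; apply is_lim_seq_sum_Series; assumption.
Qed.
End Pairing.

(** * The series 1F2(1; a, c; z) *)

Definition hyp_term (a c z : R) (k : nat) : R := z ^ k / (poch a k * poch c k).
Definition hyp (a c z : R) : R := Series (hyp_term a c z).

Definition inv_poch_succ (c : R) (k : nat) : R := / poch c (S k).

Lemma inv_poch_succ_anti c1 c2 k : 0 < c1 <= c2 -> inv_poch_succ c2 k <= inv_poch_succ c1 k.
Proof.
  intros Hc; apply Rinv_le_contravar; [apply poch_pos; lra|].
  pose proof (poch_ratio_le c1 c2 O (S k) Hc (Nat.le_0_l _)); simpl in *; lra.
Qed.

Lemma inv_poch_succ_ratio c1 c2 j n : 0 < c1 <= c2 -> (j < n)%nat ->
  inv_poch_succ c2 n * inv_poch_succ c1 j <= inv_poch_succ c2 j * inv_poch_succ c1 n.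
Proof.
  intros Hc Hjn; unfold inv_poch_succ; rewrite <- !Rinv_mult.
  pose proof (poch_ratio_le c1 c2 (S j) (S n) Hc ltac:(lia)).
  apply Rinv_le_contravar; [apply Rmult_lt_0_compat; apply poch_pos|]; lra.
Qed.

Section Hypergeometric.
Variables a z : R.
Hypotheses (Ha : 0 < a) (Hz : 0 < z).

Lemma hyp_term_pos c k : 0 < c -> 0 < hyp_term a c z k.
Proof.
  intros Hc; apply Rdiv_lt_0_compat; [now apply pow_lt|].
  apply Rmult_lt_0_compat; now apply poch_pos.
Qed.

Lemma is_lim_seq_inv_quadratic c : 0 < c ->
  is_lim_seq (fun n => / ((a + INR n) * (c + INR n))) 0.
Proof.
  intros Hc.
  assert (Hlin : forall b, is_lim_seq (fun n => b + INR n) p_infty).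
  { intros b; eapply is_lim_seq_plus; [apply is_lim_seq_const|apply is_lim_seq_INR|reflexivity]. }
  apply (is_lim_seq_inv _ p_infty); [|discriminate].
  eapply is_lim_seq_mult; [apply Hlin|apply Hlin|apply is_Rbar_mult_p_infty_pos; exact I].
Qed.

Lemma ex_series_hyp_term c : 0 < c -> ex_series (hyp_term a c z).
Proof.
  intros Hc; apply ex_series_Rabs, (ex_series_DAlembert _ 0); [lra| |].
  - intros n; apply Rgt_not_eq, hyp_term_pos, Hc.
  - apply (is_lim_seq_ext (fun n => z * / ((a + INR n) * (c + INR n)))).
    + intros n; pose proof (pos_INR n); pose proof (poch_pos a n Ha); pose proof (poch_pos c n Hc).
      rewrite Rabs_pos_eq.
      * pose proof (pow_lt z n Hz).
        unfold hyp_term; simpl; field; repeat split; lra.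
      * apply Rlt_le, Rdiv_lt_0_compat; apply hyp_term_pos, Hc.
    + replace (Finite 0) with (Rbar_mult z 0) by (simpl; f_equal; ring).
      apply is_lim_seq_scal_l, is_lim_seq_inv_quadratic, Hc.
Qed.

Lemma hyp_ge_1 c : 0 < c -> 1 <= hyp a c z.
Proof.
  intros Hc; replace 1 with (hyp_term a c z O) by (unfold hyp_term; simpl; field).
  apply Series_ge_head; [apply ex_series_hyp_term, Hc|].
  intros k; apply Rlt_le, hyp_term_pos, Hc.
Qed.

Definition hyp_coef (k : nat) : R := z ^ k / poch a k.

Lemma hyp_coef_pos k : 0 < hyp_coef k.
Proof. apply Rdiv_lt_0_compat; [apply pow_lt|apply poch_pos]; assumption. Qed.

Lemma hyp_coef_succ k : hyp_coef (S k) = hyp_coef k * (z / (a + INR k)).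
Proof.
  pose proof (poch_pos a k Ha); pose proof (pos_INR k).
  unfold hyp_coef; simpl; field; lra.
Qed.

Lemma hyp_coef_ratio j n : (j < n)%nat ->
  hyp_coef j * hyp_coef (S n) <= hyp_coef n * hyp_coef (S j).
Proof.
  intros Hjn; rewrite !hyp_coef_succ.
  assert (Hjn' : INR j < INR n) by (apply lt_INR, Hjn).
  pose proof (pos_INR j).
  assert (0 <= hyp_coef j * hyp_coef n)
    by (apply Rlt_le, Rmult_lt_0_compat; apply hyp_coef_pos).
  assert (z / (a + INR n) <= z / (a + INR j)).
  { apply Rmult_le_compat_l; [lra|apply Rinv_le_contravar; lra]. }
  nra.
Qed.

Definition hyp_psi (c : R) : R := Series (fun k => hyp_coef k * inv_poch_succ c k).
Definition hyp_phi (c : R) : R := Series (fun k => hyp_coef (S k) * inv_poch_succ c k).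

Lemma hyp_succ_param c : 0 < c -> hyp a (c + 1) z = c * hyp_psi c.
Proof.
  intros Hc; unfold hyp, hyp_psi; rewrite <- Series_scal_l; apply Series_ext; intros k.
  pose proof (poch_pos a k Ha); pose proof (poch_pos (c + 1) k ltac:(lra)).
  unfold hyp_term, hyp_coef, inv_poch_succ; rewrite poch_succ_shift; field; lra.
Qed.

Lemma hyp_incr_1 c : 0 < c -> hyp a c z = 1 + hyp_phi c.
Proof.
  intros Hc; unfold hyp, hyp_phi; rewrite Series_incr_1 by (apply ex_series_hyp_term, Hc).
  f_equal; [unfold hyp_term; simpl; field|].
  apply Series_ext; intros k; unfold hyp_term, hyp_coef, inv_poch_succ, Rdiv.
  rewrite Rinv_mult; ring.
Qed.

Lemma hyp_phi_nonneg c : 0 < c -> 0 <= hyp_phi c.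
Proof. intros Hc; pose proof (hyp_ge_1 c Hc); rewrite hyp_incr_1 in * by exact Hc; lra. Qed.

Lemma ex_series_coef_inv_poch c : 0 < c ->
  ex_series (fun k => hyp_coef k * inv_poch_succ c k).
Proof.
  intros Hc; apply (ex_series_ext (fun k => / c * hyp_term a (c + 1) z k)).
  - intros k; pose proof (poch_pos a k Ha); pose proof (poch_pos (c + 1) k ltac:(lra)).
    simpl; unfold hyp_term, hyp_coef, inv_poch_succ; rewrite poch_succ_shift; field; lra.
  - apply (ex_series_scal_l (V := R_NormedModule)), ex_series_hyp_term; lra.
Qed.

Lemma ex_series_coef_succ_inv_poch c : 0 < c ->
  ex_series (fun k => hyp_coef (S k) * inv_poch_succ c k).
Proof.
  intros Hc; apply (ex_series_ext (fun k => hyp_term a c z (S k))).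
  - intros k; simpl; unfold hyp_term, hyp_coef, inv_poch_succ, Rdiv; rewrite Rinv_mult; ring.
  - exact (proj1 (ex_series_incr_1 _) (ex_series_hyp_term c Hc)).
Qed.

Lemma hyp_psi_lt c1 c2 : 0 < c1 -> c1 < c2 -> hyp_psi c2 < hyp_psi c1.
Proof.
  intros H1 H12; assert (H2 : 0 < c2) by lra.
  apply Rlt_0_minus; unfold hyp_psi.
  rewrite <- Series_minus by (apply ex_series_coef_inv_poch; assumption).
  eapply Rlt_le_trans; [|apply Series_ge_head].
  - assert (/ c2 < / c1) by (apply Rinv_lt_contravar; nra).
    unfold hyp_coef, inv_poch_succ; simpl.
    replace (1 / 1 * / (1 * (c1 + 0)) - 1 / 1 * / (1 * (c2 + 0))) with (/ c1 - / c2)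
      by (field; lra).
    lra.
  - exact (ex_series_minus (V := R_NormedModule) _ _
             (ex_series_coef_inv_poch c1 H1) (ex_series_coef_inv_poch c2 H2)).
  - intros k; rewrite <- Rmult_minus_distr_l; apply Rmult_le_pos.
    + apply Rlt_le, hyp_coef_pos.
    + pose proof (inv_poch_succ_anti c1 c2 k ltac:(lra)); lra.
Qed.

Lemma hyp_psi_phi_pairing c1 c2 : 0 < c1 <= c2 ->
  hyp_psi c2 * hyp_phi c1 <= hyp_psi c1 * hyp_phi c2.
Proof.
  intros Hc; unfold hyp_psi, hyp_phi; apply Series_pairing_le.
  - apply hyp_coef_ratio.
  - intros j n; apply inv_poch_succ_ratio, Hc.
  - apply ex_series_coef_inv_poch; lra.
  - apply ex_series_coef_succ_inv_poch; lra.
  - apply ex_series_coef_inv_poch; lra.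
  - apply ex_series_coef_succ_inv_poch; lra.
Qed.

Lemma hyp_shift_ratio_decreasing c1 c2 : 0 < c1 -> c1 < c2 ->
  hyp a (c2 + 1) z / (c2 * hyp a c2 z) < hyp a (c1 + 1) z / (c1 * hyp a c1 z).
Proof.
  intros H1 H12; assert (H2 : 0 < c2) by lra.
  pose proof (hyp_psi_lt c1 c2 H1 H12); pose proof (hyp_psi_phi_pairing c1 c2 ltac:(lra)).
  pose proof (hyp_phi_nonneg c1 H1); pose proof (hyp_phi_nonneg c2 H2).
  rewrite !hyp_succ_param, !hyp_incr_1 by assumption.
  replace (c2 * hyp_psi c2 / (c2 * (1 + hyp_phi c2))) with (hyp_psi c2 / (1 + hyp_phi c2))
    by (field; lra).
  replace (c1 * hyp_psi c1 / (c1 * (1 + hyp_phi c1))) with (hyp_psi c1 / (1 + hyp_phi c1))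
    by (field; lra).
  apply (Rmult_lt_reg_r ((1 + hyp_phi c1) * (1 + hyp_phi c2))); [nra|].
  field_simplify; nra.
Qed.
End Hypergeometric.

Lemma lommel_t_eq_hyp mu nu x : 0 < x -> 0 < (mu - nu + 3) / 2 -> 0 < (mu + nu + 3) / 2 ->
  lommel_t mu nu x
  = Rpower (x / 2) (mu + 1) / (Gamma ((mu - nu + 3) / 2) * Gamma ((mu + nu + 3) / 2))
    * hyp ((mu - nu + 3) / 2) ((mu + nu + 3) / 2) ((x / 2) ^ 2).
Proof.
  intros Hx Ha Hc; unfold lommel_t, hyp; rewrite <- Series_scal_l; apply Series_ext; intros k.
  unfold lommel_t_term, hyp_term; rewrite !Gamma_add_nat by assumption.
  replace (mu + 2 * INR k + 1) with (mu + 1 + INR (2 * k)) by (rewrite mult_INR; simpl; ring).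
  rewrite Rpower_plus, Rpower_pow, pow_mult by lra.
  pose proof (Gamma_pos _ Ha); pose proof (Gamma_pos _ Hc).
  pose proof (poch_pos _ k Ha); pose proof (poch_pos _ k Hc).
  field; repeat split; lra.
Qed.

Lemma lommel_t_shift_ratio mu nu x d :
  0 < x -> 0 < (mu - nu + 3) / 2 -> 0 < (mu + nu + 3) / 2 + d ->
  lommel_t (mu + d + 1) (nu + d + 1) x / lommel_t (mu + d) (nu + d) x
  = x / 2 * (hyp ((mu - nu + 3) / 2) ((mu + nu + 3) / 2 + d + 1) ((x / 2) ^ 2)
             / (((mu + nu + 3) / 2 + d)
                * hyp ((mu - nu + 3) / 2) ((mu + nu + 3) / 2 + d) ((x / 2) ^ 2))).
Proof.
  intros Hx Ha Hc.
  set (a := (mu - nu + 3) / 2) in *; set (c := (mu + nu + 3) / 2 + d) in *.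
  set (z := (x / 2) ^ 2).
  rewrite (lommel_t_eq_hyp (mu + d + 1)), (lommel_t_eq_hyp (mu + d));
    replace ((mu + d + 1 - (nu + d + 1) + 3) / 2) with a by (unfold a; field);
    replace ((mu + d - (nu + d) + 3) / 2) with a by (unfold a; field);
    replace ((mu + d + 1 + (nu + d + 1) + 3) / 2) with (c + 1) by (unfold c; field);
    replace ((mu + d + (nu + d) + 3) / 2) with c by (unfold c; field); try lra.
  rewrite Gamma_succ, Rpower_succ by lra.
  pose proof (Gamma_pos a Ha); pose proof (Gamma_pos c Hc).
  pose proof (hyp_ge_1 a z Ha ltac:(apply pow_lt; lra) c Hc).
  assert (0 < Rpower (x / 2) (mu + d + 1)) by apply exp_pos.
  fold z; field; repeat split; lra.
Qed.

Theorem theorem3p2 (mu nu x : R) :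
  -3 < mu -> Rabs nu < mu + 3 -> 0 < x ->
  forall d1 d2 : R, 0 < d1 -> d1 < d2 ->
    lommel_t (mu + d2 + 1) (nu + d2 + 1) x / lommel_t (mu + d2) (nu + d2) x
    < lommel_t (mu + d1 + 1) (nu + d1 + 1) x / lommel_t (mu + d1) (nu + d1) x.
Proof.
  intros Hmu Hnu Hx d1 d2 Hd1 Hd12.
  assert (Ha : 0 < (mu - nu + 3) / 2) by (pose proof (Rle_abs nu); lra).
  assert (Hc : 0 < (mu + nu + 3) / 2) by (pose proof (Rle_abs (- nu)); rewrite Rabs_Ropp in *; lra).
  rewrite !lommel_t_shift_ratio by lra.
  apply Rmult_lt_compat_l; [lra|].
  apply hyp_shift_ratio_decreasing; [exact Ha|apply pow_lt; lra|lra|lra].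
Qed.
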